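(* Let $\Gamma=\langle N,H,P,(u_i)_{i\in N}\rangle$ be an extensive game with perfect information with $N=\{1,\ldots,n\}$, and let $\mathcal{G}_\Gamma$ be the GAL-structure for $\Gamma$ described in the context. Let \[\alpha \;=\; [AG]\Big(\textstyle\bigwedge_{i\in N}\, i\rightarrow \forall v_{s_i}\big(u_i(O_h(h,v^*_{s_1},\ldots,v^*_{s_n}))\geq u_i(O_h(h,v^*_{s_1},\ldots,v_{s_i},\ldots,v^*_{s_n}))\big)\Big)\] and \[\beta \;=\; [EG]\Big( h\in O(v^*_{s_1},\ldots,v^*_{s_n}) \;\wedge\; \textstyle\bigwedge_{i\in N}\, i\rightarrow \forall v_{s_i}\big(u_i(O_h(h,v^*_{s_1},\ldots,v^*_{s_n}))\geq u_i(O_h(h,v^*_{s_1},\ldots,v_{s_i},\ldots,v^*_{s_n}))\big)\Big).\] Let $s^*=(s^*_1,\ldots,s^*_n)$ be a strategy profile and let $(\sigma_{S_i})_{i\in N}$ be valuations with $\sigma_{S_i}(v^*_{s_i})=s^*_i$ for each $i$. Then: (1) $s^*$ is a subgame perfect equilibrium of $\Gamma$ if and only if $\mathcal{G}_\Gamma,(\sigma_{S_i})\models_{\emptyset}\alpha$; (2) $s^*$ is a Nash equilibrium of $\Gamma$ if and only if $\mathcal{G}_\Gamma,(\sigma_{S_i})\models_{\emptyset}\beta$.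
   Context: An extensive game with perfect information is a tuple $\langle N,H,P,(u_i)\rangle$: $N$ a set of players; $H$ a set of (finite or infinite) sequences of actions (histories) such that the empty sequence $\emptyset\in H$, $H$ is closed under taking initial segments, and if every finite initial segment of an infinite sequence is in $H$ then so is the infinite sequence. A history is terminal if it is infinite or there is no action $a$ with $(h,a)\in H$; $T$ is the set of terminal histories. $P$ assigns a player to each non-terminal history, and each $u_i:T\to U$ is a real-valued (utility) function. A strategy of player $i$ is a function assigning to each non-terminal history $h$ with $P(h)=i$ an action $a$ with $(h,a)\in H$; $S_i$ is the set of player $i$'s strategies. For a history $h$ and a profile $s=(s_1,\dots,s_n)$, $O_h(h,s_1,\ldots,s_n)$ is the terminal history obtained by starting at $h$ and letting each player follow his strategy; $O(s)=O_h(\emptyset,s)$ is the outcome. A profile $s^*$ is a subgame perfect equilibrium (SPE) if for every player $i$, every history $h\in H$ with $P(h)=i$ and every $s_i\in S_i$: $u_i(O_h(h,s^*_1,\ldots,s^*_n))\geq u_i(O_h(h,s^*_1,\ldots,s_i,\ldots,s^*_n))$. A profile $s^*$ is a Nash equilibrium (NE) if the same inequality holds for every player $i$, every $s_i\in S_i$ and every history $h$ on the path of $s^*$ (i.e. $h$ is an initial segment of $O(s^* )$) with $P(h)=i$. The GAL-structure $\mathcal{G}_\Gamma$: its states are the histories $h\in H$, the initial state is $\emptyset$; the transition (action) relation is $\mathcal{CA}=\{\langle h,(h,a)\rangle : (h,a)\in H\}$; at each state $h$ the set of players to move is $N_h=\{P(h)\}$ if $h$ is non-terminal and $N_h=\emptyset$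 otherwise. It is many-sorted with sorts $H$ (domain $H$), $T$ (domain $T$), $S_i$ (domain $S_i$, the strategies of player $i$) and $U$ (utility values); the 0-ary symbol $h$ is non-rigid and at state $h_k$ denotes the history $h_k$ itself; $u_i$, $O$, $O_h$ and $\geq$ are interpreted rigidly (same at every state) as in $\Gamma$, and ''$h\in O(\ldots)$'' holds at a state $h_k$ iff $h_k$ is an initial segment of (lies on) the outcome $O(\ldots)$. Semantics: the atomic formula $i$ (a player) holds at state $e$ iff $i\in N_e$; $\forall v_{s_i}\varphi$ holds iff $\varphi$ holds for every value of $v_{s_i}$ in $S_i$; Boolean connectives as usual. A path from $e$ is a maximal sequence of states starting at $e$ along $\mathcal{CA}$: either infinite, or finite ending in a state with no successor. $[AG]\varphi$ holds at $e$ iff $\varphi$ holds at every state of every path from $e$; $[EG]\varphi$ holds at $e$ iff there is a path from $e$ every state of which satisfies $\varphi$. $\mathcal{G},(\sigma)\models_e\varphi$ means state $e$ satisfies $\varphi$ under valuation $\sigma$ of the free variables. *)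

From Stdlib Require Import Reals List Classical ClassicalEpsilon ClassicalDescription.
From Stdlib Require Vectors.Fin.
Import ListNotations.
Open Scope R_scope.
Set Implicit Arguments.

Inductive hist (A : Type) : Type :=
| FinH : list A -> hist A
| InfH : (nat -> A) -> hist A.
Arguments FinH {A} _.
Arguments InfH {A} _.

Definition prefix_of {A} (f : nat -> A) (k : nat) : list A := map f (seq 0 k).

Definition init_seg {A} (h h' : hist A) : Prop :=
  match h, h' with
  | FinH l, FinH l' => exists l2, l' = l ++ l2
  | FinH l, InfH f => l = prefix_of f (length l)
  | InfH f, InfH g => forall m, f m = g m
  | InfH _, FinH _ => False
  end.

Record game (A : Type) (n : nat) := {
  H : hist A -> Prop;
  P : hist A -> Fin.t n;             (* meaningful on non-terminal histories *)
  u : Fin.t n -> hist A -> R;        (* meaningful on terminal histories *)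
  H_nil : H (FinH nil);
  H_prefix : forall l1 l2, H (FinH (l1 ++ l2)) -> H (FinH l1);
  H_inf_prefix : forall f k, H (InfH f) -> H (FinH (prefix_of f k));
  H_limit : forall f, (forall k, H (FinH (prefix_of f k))) -> H (InfH f)
}.

Section Game.
Context {A : Type} {n : nat} (G : game A n).

Definition terminal (h : hist A) : Prop :=
  match h with
  | InfH _ => True
  | FinH l => ~ exists a, H G (FinH (l ++ [a]))
  end.

(* A strategy of player i: an action for every non-terminal history h with
   P h = i, which is a legal continuation (values elsewhere are irrelevant). *)
Record strategy (i : Fin.t n) := {
  act : list A -> A;
  act_ok : forall l, H G (FinH l) -> ~ terminal (FinH l) -> P G (FinH l) = i ->
                     H G (FinH (l ++ [act l]))
}.

Definition profile := forall i : Fin.t n, strategy i.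

Definition update (s : profile) (i : Fin.t n) (si : strategy i) : profile :=
  fun j => match Fin.eq_dec i j with
           | left e => eq_rect i strategy si j e
           | right _ => s j
           end.
Arguments update : clear implicits.

Definition behave (s : profile) (l : list A) : A := act (s (P G (FinH l))) l.

Fixpoint play (s : profile) (l : list A) (k : nat) : list A :=
  match k with
  | O => l
  | S k' => let l' := play s l k' in
            if excluded_middle_informative (terminal (FinH l')) then l'
            else l' ++ [behave s l']
  end.

Definition Oh (h : hist A) (s : profile) : hist A :=
  match h with
  | InfH f => InfH f
  | FinH l =>
      match excluded_middle_informative
              (exists k, terminal (FinH (play s l k))) with
      | left ex => FinH (play s l (proj1_sig (constructive_indefinite_description _ ex)))
      | right _ => InfH (fun m => nth m (play s l (S m)) (behave s nil))
      end
  end.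

Definition O (s : profile) : hist A := Oh (FinH nil) s.

Definition no_profitable_dev (s : profile) (i : Fin.t n) (h : hist A) : Prop :=
  forall si : strategy i, u G i (Oh h s) >= u G i (Oh h (update s i si)).

Definition SPE (s : profile) : Prop :=
  forall (i : Fin.t n) (h : hist A),
    H G h -> ~ terminal h -> P G h = i -> no_profitable_dev s i h.

Definition NE (s : profile) : Prop :=
  forall (i : Fin.t n) (h : hist A),
    H G h -> init_seg h (O s) -> ~ terminal h -> P G h = i ->
    no_profitable_dev s i h.

Definition CA (h h' : hist A) : Prop :=
  H G h /\ exists l a, h = FinH l /\ h' = FinH (l ++ [a]) /\ H G h'.

Definition to_move (h : hist A) (i : Fin.t n) : Prop :=
  ~ terminal h /\ P G h = i.

Definition inf_path (e : hist A) (p : nat -> hist A) : Prop :=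
  p 0%nat = e /\ forall k, CA (p k) (p (S k)).

Definition fin_path (e : hist A) (ps : list (hist A)) : Prop :=
  (exists rest, ps = e :: rest) /\
  (forall k, (S k < length ps)%nat -> CA (nth k ps e) (nth (S k) ps e)) /\
  ~ exists h', CA (last ps e) h'.

Definition AG (phi : hist A -> Prop) (e : hist A) : Prop :=
  (forall p, inf_path e p -> forall k, phi (p k)) /\
  (forall ps, fin_path e ps -> forall x, In x ps -> phi x).

Definition EG (phi : hist A -> Prop) (e : hist A) : Prop :=
  (exists p, inf_path e p /\ forall k, phi (p k)) \/
  (exists ps, fin_path e ps /\ forall x, In x ps -> phi x).

(* the inner formula  /\_{i in N} (i -> forall v_{s_i} (...)),
   under the valuation v*_{s_i} |-> s i *)
Definition eq_formula (s : profile) (h : hist A) : Prop :=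
  forall i : Fin.t n, to_move h i -> no_profitable_dev s i h.

Definition sat_alpha (s : profile) (e : hist A) : Prop :=
  AG (eq_formula s) e.

Definition sat_beta (s : profile) (e : hist A) : Prop :=
  EG (fun h => init_seg h (O s) /\ eq_formula s h) e.

End Game.

From Stdlib Require Import Reals List.
From Stdlib Require Import Arith Lia Classical ClassicalEpsilon ClassicalDescription Wf_nat.
Import ListNotations.

(* [AG] ranges over every state of every maximal path from the root, and every
   finite history lies on such a path (run through its prefixes, then follow
   any profile), so alpha says that the equilibrium condition holds at every
   history, i.e. subgame perfection.  The play of s is a maximal path from the
   root all of whose states are initial segments of O(s), which gives beta
   from a Nash equilibrium.  Conversely, a maximal path of initial segments of
   O(s) cannot stop before a non-terminal history h on O(s): its last state
   would be a proper prefix of h, hence still have a successor.  So beta forces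
   the equilibrium condition along the whole outcome. *)

Local Open Scope nat_scope.

Lemma exists_least_nat (P : nat -> Prop) :
  (exists k, P k) -> exists k, P k /\ forall j, j < k -> ~ P j.
Proof.
  intros ex.
  destruct (dec_inh_nat_subset_has_unique_least_element P (fun k => classic (P k)) ex)
    as [k [[hk hmin] _]].
  exists k. split; [exact hk|]. intros j hj hPj. specialize (hmin j hPj). lia.
Qed.

Lemma last_nth_pred {X : Type} (l : list X) (d : X) :
  last l d = nth (pred (length l)) l d.
Proof.
  induction l as [|x [|y l] IH]; [reflexivity|reflexivity|].
  change (last (y :: l) d = nth (length l) (y :: l) d). exact IH.
Qed.

Lemma firstn_S_app {X : Type} {l : list X} {k : nat} :
  k < length l -> exists a, firstn (S k) l = firstn k l ++ [a].
Proof.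
  intros hk. destruct l as [|x l']; [simpl in hk; lia|].
  exists (last (firstn (S k) (x :: l')) x).
  rewrite <- (removelast_firstn (x :: l') hk).
  apply app_removelast_last. discriminate.
Qed.

Lemma nth_common_prefix {X : Type} (l1 l2 x1 x2 : list X) (m : nat) (d : X) :
  l1 ++ x1 = l2 ++ x2 -> m < length l1 -> m < length l2 -> nth m l1 d = nth m l2 d.
Proof.
  intros e h1 h2. rewrite <- (app_nth1 l1 x1 d h1), e. apply app_nth1. exact h2.
Qed.

Lemma prefix_of_nth {X : Type} (f : nat -> X) (l : list X) (d : X) :
  (forall m, m < length l -> nth m l d = f m) -> l = prefix_of f (length l).
Proof.
  intros hl. unfold prefix_of.
  apply nth_ext with (d := d) (d' := f 0); [now rewrite length_map, length_seq|].
  intros m hm. rewrite map_nth, seq_nth by exact hm. apply hl. exact hm.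
Qed.

Section Histories.
Context {A : Type} {n : nat} (G : game A n).

Lemma init_seg_fin_prefix {l1 l2 : list A} {X : hist A} :
  init_seg (FinH l1) X -> init_seg (FinH l2) X -> length l1 <= length l2 ->
  exists l3, l2 = l1 ++ l3.
Proof.
  destruct X as [L|f]; simpl.
  - intros [a ha] [b hb] hle. rewrite ha in hb.
    destruct (app_eq_app _ _ _ _ hb) as [l [[e1 e2]|[e1 e2]]].
    + subst l1. rewrite length_app in hle. destruct l as [|c l]; simpl in hle; [|lia].
      exists []. now rewrite !app_nil_r.
    + exists l. exact e1.
  - intros h1 h2 hle. exists (map f (seq (length l1) (length l2 - length l1))).
    rewrite h2 at 1. unfold prefix_of.
    replace (length l2) with (length l1 + (length l2 - length l1)) at 1 by lia.
    rewrite seq_app, map_app. unfold prefix_of in h1. now rewrite <- h1.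
Qed.

Lemma init_seg_fin_unique {l1 l2 : list A} {X : hist A} :
  init_seg (FinH l1) X -> init_seg (FinH l2) X -> length l1 = length l2 -> l1 = l2.
Proof.
  intros h1 h2 he. destruct (init_seg_fin_prefix h1 h2 ltac:(lia)) as [l3 ->].
  rewrite length_app in he. destruct l3; simpl in he; [now rewrite app_nil_r|lia].
Qed.

Lemma prefix_not_terminal {l : list A} (l' : list A) (a : A) :
  H G (FinH (l ++ a :: l')) -> ~ terminal G (FinH l).
Proof.
  intros hl ht. apply ht. exists a. apply (H_prefix G _ l'). now rewrite <- app_assoc.
Qed.

Lemma nonterminal_CA (l : list A) :
  H G (FinH l) -> ~ terminal G (FinH l) -> exists h', CA G (FinH l) h'.
Proof.
  intros hl ht. apply NNPP in ht. destruct ht as [a ha].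
  exists (FinH (l ++ [a])). split; [exact hl|]. exists l, a. auto.
Qed.

Lemma CA_inv {l : list A} {h' : hist A} :
  CA G (FinH l) h' -> exists a, h' = FinH (l ++ [a]) /\ H G h'.
Proof.
  intros [_ [l' [a [e1 [e2 e3]]]]]. injection e1 as <-. exists a. auto.
Qed.

Lemma inf_path_state {l0 : list A} {p : nat -> hist A} :
  inf_path G (FinH l0) p ->
  forall k, H G (p k) /\ exists l, p k = FinH l /\ length l = length l0 + k.
Proof.
  intros [h0 hs] k. split; [exact (proj1 (hs k))|].
  induction k as [|k [l [e len]]].
  - exists l0. split; [exact h0|lia].
  - pose proof (hs k) as hk. rewrite e in hk. destruct (CA_inv hk) as [a [e' _]].
    exists (l ++ [a]). split; [exact e'|]. rewrite length_app; simpl; lia.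
Qed.

Lemma fin_path_state {l0 : list A} {ps : list (hist A)} :
  H G (FinH l0) -> fin_path G (FinH l0) ps ->
  forall k, k < length ps -> H G (nth k ps (FinH l0)) /\
    exists l, nth k ps (FinH l0) = FinH l /\ length l = length l0 + k.
Proof.
  intros hl0 [[rest ->] [hs _]] k. induction k as [|k IH]; intros hk.
  - split; [exact hl0|]. exists l0. split; [reflexivity|lia].
  - destruct (IH ltac:(lia)) as [_ [l [e len]]].
    specialize (hs k hk). rewrite e in hs. destruct (CA_inv hs) as [a [e' hH]].
    split; [exact hH|]. exists (l ++ [a]). split; [exact e'|]. rewrite length_app; simpl; lia.
Qed.

Section Chain.
Variable r : nat -> list A.
Hypothesis chain_H : forall k, H G (FinH (r k)).
Hypothesis chain_step : forall k, ~ terminal G (FinH (r k)) -> exists a, r (S k) = r k ++ [a].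

Lemma chain_CA {k : nat} : ~ terminal G (FinH (r k)) -> CA G (FinH (r k)) (FinH (r (S k))).
Proof.
  intros ht. destruct (chain_step _ ht) as [a ha].
  split; [apply chain_H|]. exists (r k), a. rewrite ha. split; [reflexivity|].
  split; [reflexivity|]. rewrite <- ha. apply chain_H.
Qed.

Lemma chain_inf_path :
  (forall k, ~ terminal G (FinH (r k))) -> inf_path G (FinH (r 0)) (fun k => FinH (r k)).
Proof. intros hnt. split; [reflexivity|]. intros k. exact (chain_CA (hnt k)). Qed.

Lemma chain_fin_path {K : nat} :
  terminal G (FinH (r K)) -> (forall j, j < K -> ~ terminal G (FinH (r j))) ->
  fin_path G (FinH (r 0)) (map (fun k => FinH (r k)) (seq 0 (S K))).
Proof.
  intros hK hbefore. split; [|split].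
  - exists (map (fun k => FinH (r k)) (seq 1 K)). reflexivity.
  - intros k hk. rewrite length_map, length_seq in hk.
    rewrite !(map_nth (fun k => FinH (r k))), !seq_nth by lia.
    exact (chain_CA (hbefore k ltac:(lia))).
  - rewrite seq_S, map_app. simpl map. rewrite last_last. intros [h' hCA].
    destruct (CA_inv hCA) as [a [-> ha]]. exact (hK (ex_intro _ a ha)).
Qed.

Lemma AG_chain (Q : hist A -> Prop) :
  AG G Q (FinH (r 0)) ->
  forall k, (forall j, j < k -> ~ terminal G (FinH (r j))) -> Q (FinH (r k)).
Proof.
  intros [hinf hfin] k hk.
  destruct (classic (exists K, terminal G (FinH (r K)))) as [ex|nex].
  - destruct (exists_least_nat _ ex) as [K [hK hbefore]].
    assert (k <= K) by (apply Nat.nlt_ge; intros hlt; exact (hk K hlt hK)).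
    apply (hfin _ (chain_fin_path hK hbefore)).
    apply in_map_iff. exists k. split; [reflexivity|]. apply in_seq. lia.
  - exact (hinf _ (chain_inf_path (fun k ht => nex (ex_intro _ k ht))) k).
Qed.

Lemma EG_chain (Q : hist A -> Prop) :
  (forall k, Q (FinH (r k))) -> EG G Q (FinH (r 0)).
Proof.
  intros hQ.
  destruct (classic (exists K, terminal G (FinH (r K)))) as [ex|nex].
  - destruct (exists_least_nat _ ex) as [K [hK hbefore]].
    right. exists (map (fun k => FinH (r k)) (seq 0 (S K))).
    split; [exact (chain_fin_path hK hbefore)|].
    intros x hx. apply in_map_iff in hx. destruct hx as [k [<- _]]. apply hQ.
  - left. exists (fun k => FinH (r k)).
    split; [exact (chain_inf_path (fun k ht => nex (ex_intro _ k ht)))|exact hQ].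
Qed.

End Chain.

Section Play.
Variable s : profile G.

Lemma play_extends (l : list A) (k m : nat) : exists l3, play s l (k + m) = play s l k ++ l3.
Proof.
  induction m as [|m [l3 e]].
  - exists []. now rewrite Nat.add_0_r, app_nil_r.
  - rewrite Nat.add_succ_r. simpl. destruct (excluded_middle_informative _).
    + exists l3. exact e.
    + exists (l3 ++ [behave s (play s l (k + m))]). now rewrite e, app_assoc.
Qed.

Lemma play_in_H (l : list A) (k : nat) : H G (FinH l) -> H G (FinH (play s l k)).
Proof.
  intros hl. induction k as [|k IH]; simpl; [exact hl|].
  destruct (excluded_middle_informative _) as [t|t]; [exact IH|].
  exact (act_ok (s (P G (FinH (play s l k)))) IH t eq_refl).
Qed.

Lemma play_step {l : list A} {k : nat} :
  ~ terminal G (FinH (play s l k)) -> exists a, play s l (S k) = play s l k ++ [a].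
Proof.
  intros t. simpl. destruct (excluded_middle_informative _); [contradiction|eexists; reflexivity].
Qed.

Lemma play_length_le (l : list A) (k : nat) : length (play s l k) <= length l + k.
Proof.
  induction k as [|k IH]; simpl; [lia|].
  destruct (excluded_middle_informative _); [lia|]. rewrite length_app; simpl; lia.
Qed.

Lemma play_stable {l : list A} {k : nat} (m : nat) :
  terminal G (FinH (play s l k)) -> play s l (k + m) = play s l k.
Proof.
  intros t. induction m as [|m IH]; [now rewrite Nat.add_0_r|].
  rewrite Nat.add_succ_r. simpl. rewrite IH.
  destruct (excluded_middle_informative _); [reflexivity|contradiction].
Qed.

Lemma play_length (l : list A) (k : nat) :
  (forall j, ~ terminal G (FinH (play s l j))) -> length (play s l k) = length l + k.
Proof.
  intros hnt. induction k as [|k IH]; [simpl; lia|].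
  destruct (play_step (hnt k)) as [a ->]. rewrite length_app, IH. simpl. lia.
Qed.

(* [Oh] picks an arbitrary (not necessarily least) termination time, so the
   finite case relies on the play being stationary once terminal. *)
Lemma play_init_seg_Oh (l : list A) (k : nat) : init_seg (FinH (play s l k)) (Oh (FinH l) s).
Proof.
  unfold Oh. destruct (excluded_middle_informative _) as [ex|nex].
  - destruct (constructive_indefinite_description _ ex) as [K hK]. simpl.
    destruct (Nat.le_ge_cases k K) as [le|ge].
    + destruct (play_extends l k (K - k)) as [l3 e].
      replace (k + (K - k)) with K in e by lia. exists l3. exact e.
    + exists []. rewrite app_nil_r, <- (play_stable (k - K) hK).
      f_equal. lia.
  - assert (hnt : forall j, ~ terminal G (FinH (play s l j))).
    { intros j t. exact (nex (ex_intro _ j t)). }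
    apply prefix_of_nth with (d := behave s nil). intros m hm.
    rewrite (play_length l k hnt) in hm.
    destruct (play_extends l k (S m)) as [l1 e1].
    destruct (play_extends l (S m) k) as [l2 e2].
    apply (nth_common_prefix _ _ l1 l2); [now rewrite <- e1, <- e2, Nat.add_comm|..].
    + rewrite (play_length l k hnt). lia.
    + rewrite (play_length l (S m) hnt). lia.
Qed.

Lemma chain_through (l : list A) :
  H G (FinH l) ->
  exists r : nat -> list A, r 0 = [] /\ r (length l) = l /\
    (forall k, H G (FinH (r k))) /\
    (forall k, ~ terminal G (FinH (r k)) -> exists a, r (S k) = r k ++ [a]) /\
    (forall j, j < length l -> ~ terminal G (FinH (r j))).
Proof.
  (* By truncated subtraction this is the k-th prefix of l while k <= length l,
     and the play of s from l afterwards. *)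
  intros hl. exists (fun k => firstn k (play s l (k - length l))).
  assert (hlow : forall k, k <= length l -> firstn k (play s l (k - length l)) = firstn k l).
  { intros k hk. now replace (k - length l) with 0 by lia. }
  assert (hhigh : forall k, length l <= k ->
            firstn k (play s l (k - length l)) = play s l (k - length l)).
  { intros k hk. apply firstn_all2. pose proof (play_length_le l (k - length l)). lia. }
  split; [reflexivity|]. split; [now rewrite hlow, firstn_all|]. split; [|split].
  - intros k. apply (H_prefix G _ (skipn k (play s l (k - length l)))).
    rewrite firstn_skipn. apply play_in_H, hl.
  - intros k hk. destruct (Nat.lt_ge_cases k (length l)) as [lt|ge].
    + rewrite !hlow by lia. apply firstn_S_app, lt.
    + rewrite !hhigh in * by lia. replace (S k - length l) with (S (k - length l)) by lia.
      apply play_step, hk.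
  - intros j hj. rewrite hlow by lia. destruct (firstn_S_app hj) as [a ha].
    apply (prefix_not_terminal (skipn (S j) l) a).
    replace (firstn j l ++ a :: skipn (S j) l) with (firstn (S j) l ++ skipn (S j) l)
      by (rewrite ha, <- app_assoc; reflexivity).
    now rewrite firstn_skipn.
Qed.

End Play.
Lemma AG_root_iff (s : profile G) (Q : hist A -> Prop) :
  AG G Q (FinH []) <-> forall l, H G (FinH l) -> Q (FinH l).
Proof.
  split.
  - intros hAG l hl.
    destruct (chain_through s l hl) as [r [r0 [rl [hr [hs hbefore]]]]].
    rewrite <- rl. apply (AG_chain r hr hs Q); [now rewrite r0|exact hbefore].
  - intros hQ. split.
    + intros p hp k. destruct (inf_path_state hp k) as [hH [l [e _]]].
      rewrite e in *. exact (hQ l hH).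
    + intros ps hps x hx. destruct (In_nth ps x (FinH []) hx) as [k [hk <-]].
      destruct (fin_path_state (H_nil G) hps _ hk) as [hH [l [e _]]].
      rewrite e in *. exact (hQ l hH).
Qed.

Lemma EG_init_seg (X : hist A) (Q : hist A -> Prop) (l : list A) :
  EG G (fun h => init_seg h X /\ Q h) (FinH []) ->
  H G (FinH l) -> init_seg (FinH l) X -> ~ terminal G (FinH l) -> Q (FinH l).
Proof.
  intros [[p [hp hall]]|[ps [hps hall]]] hl hX ht.
  - destruct (inf_path_state hp (length l)) as [_ [l' [e len]]]. simpl in len.
    destruct (hall (length l)) as [hX' hQ]. rewrite e in hX', hQ.
    now rewrite (init_seg_fin_unique hX' hX len) in hQ.
  - destruct (Nat.lt_ge_cases (length l) (length ps)) as [lt|ge].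
    + destruct (fin_path_state (H_nil G) hps _ lt) as [_ [l' [e len]]]. simpl in len.
      destruct (hall _ (nth_In ps (FinH []) lt)) as [hX' hQ]. rewrite e in hX', hQ.
      now rewrite (init_seg_fin_unique hX' hX len) in hQ.
    + exfalso.
      pose proof hps as [[rest erest] [_ hmax]].
      assert (hlast : pred (length ps) < length ps) by (rewrite erest; simpl; lia).
      destruct (fin_path_state (H_nil G) hps _ hlast) as [hH [t [et lent]]]. simpl in lent.
      destruct (hall _ (nth_In ps (FinH []) hlast)) as [hXt _]. rewrite et in hXt.
      destruct (init_seg_fin_prefix hXt hX ltac:(lia)) as [[|a l3] ->].
      * rewrite length_app in ge. simpl in ge. lia.
      * apply hmax. rewrite last_nth_pred, et.
        apply nonterminal_CA; [rewrite <- et; exact hH|exact (prefix_not_terminal l3 a hl)].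
Qed.

End Histories.

Theorem theorem1 (A : Type) (n : nat) (G : game A n) (s : profile G) :
  (SPE s <-> sat_alpha s (FinH nil)) /\ (NE s <-> sat_beta s (FinH nil)).
Proof.
  split.
  - unfold sat_alpha. rewrite (AG_root_iff G s). split.
    + intros hspe l hl i [ht hP]. exact (hspe i _ hl ht hP).
    + intros hall i [l|f] hl ht hP; [exact (hall l hl i (conj ht hP))|contradiction (ht I)].
  - split.
    + intros hne.
      apply (EG_chain G (play s []) (fun k => play_in_H G s [] k (H_nil G))
                      (fun k => play_step G s)).
      intros k. split; [apply play_init_seg_Oh|]. intros i [ht hP].
      apply hne; [apply play_in_H, H_nil|apply play_init_seg_Oh|exact ht|exact hP].
    + intros hb i [l|f] hl hX ht hP; [|contradiction (ht I)].
      exact (EG_init_seg G (O s) (eq_formula s) l hb hl hX ht i (conj ht hP)).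
Qed.
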